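(* Let $K$ be a field equipped with a field endomorphism $\sigma$, and for a matrix $E$ over $K$ and $j\in\mathbb{N}$ let $E^{(j)}$ denote $E$ with $\sigma^j$ applied entrywise. Let $E_1,\ldots,E_t\in K^{p\times q}$ with $t\ge1$. For $k\ge1$ let $N_k$ be the $k\times k$ block matrix (blocks of size $p\times q$) whose block in block row $a$ and block column $b$ ($0\le a,b\le k-1$) is $E_{a-b+1}^{(a)}$ if $0\le a-b\le t-1$ and zero otherwise; i.e. \[N_k=\begin{pmatrix} E_1&&&&&\\ E_2^{(1)}&E_1^{(1)}&&&&\\ \vdots&\vdots&\ddots&&&\\ E_t^{(t-1)}&E_{t-1}^{(t-1)}&\cdots&E_1^{(t-1)}&&\\ &\ddots&\ddots&\ddots&\ddots&\\ &&E_t^{(k-1)}&E_{t-1}^{(k-1)}&\cdots&E_1^{(k-1)} \end{pmatrix}.\] Then there exist $d'\in\mathbb{N}$ and $a'\in\mathbb{Z}$ such that $\operatorname{rank}_K(N_k)=d'k+a'$ for all sufficiently large $k$. Moreover, the least $k_0$ such that this equality holds for all $k\ge k_0$ is at most $(t-1)(\min\{p,q\}+2)$. *)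

From HB Require Import structures.
From mathcomp Require Import all_boot all_order all_algebra.
Set Implicit Arguments. Unset Strict Implicit. Unset Printing Implicit Defensive.
Import GRing.Theory Num.Theory.
Local Open Scope ring_scope.

Lemma ltn_mod_blk (k p : nat) (i : 'I_(k * p)) : (i %% p < p)%N.
Proof.
case: p i => [|p] i; last by rewrite ltn_mod.
by case: i => m; rewrite muln0.
Qed.

Definition blk_off (k p : nat) (i : 'I_(k * p)) : 'I_p := Ordinal (ltn_mod_blk i).

(* E is indexed 1..t (E 0 and E n for n > t are never used). *)
Definition Nmat (K : fieldType) (sigma : {rmorphism K -> K}) (p q t : nat)
  (E : nat -> 'M[K]_(p, q)) (k : nat) : 'M[K]_(k * p, k * q) :=
  \matrix_(i < k * p, j < k * q)
    let a := (i %/ p)%N in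
    let b := (j %/ q)%N in
    if (b <= a)%N && (a - b < t)%N then
      iter a sigma (E (a - b).+1 (blk_off i) (blk_off j))
    else 0.

From mathcomp Require Import all_boot all_algebra.
From mathcomp Require Import zify.
Set Implicit Arguments. Unset Strict Implicit. Unset Printing Implicit Defensive.
Import GRing.Theory.
Local Open Scope ring_scope.

(* Splitting off the first block row and column gives
   N_(k+1) = [[E_1, 0], [C, N_k^sigma]], where C only involves the first t-1
   block rows.  For a block lower triangular matrix,
   rank [[A, 0], [C, B]] = rank B + rank [A; U C] with U the left kernel of B,
   so the rank increment of N_k is governed by the subspace W_k of
   K^((t-1)p) obtained by projecting the left kernel of N_k onto its first
   t-1 block coordinates.  These subspaces satisfy W_(k+1) = Phi(W_k^sigma)
   for a monotone map Phi, hence they increase, and once W_k = W_(k+1) they are constant and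
   the rank grows by a fixed amount d at each step.  As
   rank W_(t-1) = (t-1)p - rank N_(t-1), this happens at the latest for
   k = (t-1) + rank N_(t-1) <= (t-1)(min(p,q) + 1). *)

Section BlockLowerRank.
Variable K : fieldType.

Lemma kermx_block_lower p q n r (A : 'M[K]_(p, q)) (C : 'M_(n, q)) (B : 'M_(n, r)) :
  (kermx (block_mx A 0 C B) :=:
   kermx (col_mx A (kermx B *m C)) *m block_mx 1%:M 0 0 (kermx B))%MS.
Proof.
apply/eqmxP/andP; split; last first.
  apply/sub_kermxP; rewrite -mulmxA mulmx_block !mul1mx !mul0mx !addr0 !add0r.
  rewrite mulmx_ker.
  have -> : block_mx A 0 (kermx B *m C) 0 =
      row_mx (col_mx A (kermx B *m C)) (0 : 'M_(p + n, r)).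
    by rewrite block_mxEh col_mx0.
  by rewrite mul_mx_row mulmx_ker mulmx0 row_mx0.
set Z := kermx _; have ZM0 : Z *m block_mx A 0 C B = 0 by apply: mulmx_ker.
rewrite -[Z]hsubmxK mul_row_block !mulmx0 add0r -row_mx0 in ZM0 *.
case/eq_row_mx: ZM0 => ZAC0 ZB0.
have /submxP [V rZ] : (rsubmx Z <= kermx B)%MS by apply/sub_kermxP.
rewrite rZ.
have -> : row_mx (lsubmx Z) (V *m kermx B) =
    row_mx (lsubmx Z) V *m block_mx 1%:M 0 0 (kermx B).
  by rewrite mul_row_block !mulmx0 mulmx1 addr0 add0r.
by apply/submxMr/sub_kermxP; rewrite mul_row_col mulmxA -rZ.
Qed.

Lemma mxrank_block_lower p q n r (A : 'M[K]_(p, q)) (C : 'M_(n, q)) (B : 'M_(n, r)) :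
  \rank (block_mx A 0 C B) = (\rank (col_mx A (kermx B *m C)) + \rank B)%N.
Proof.
set Y := col_mx A _; set X := block_mx (1%:M : 'M_p) 0 0 (kermx B).
have kerXY : (kermx X <= kermx Y)%MS.
  apply/sub_kermxP; set Z := kermx X; have ZX0 : Z *m X = 0 by apply: mulmx_ker.
  rewrite -[Z]hsubmxK mul_row_block !mulmx0 mulmx1 addr0 add0r -row_mx0 in ZX0 *.
  case/eq_row_mx: ZX0 => Zl0 Zr0.
  by rewrite mul_row_col Zl0 mul0mx add0r mulmxA Zr0 mul0mx.
have := mxrank_mul_ker (kermx Y) X; rewrite (capmx_idPr kerXY).
rewrite -(kermx_block_lower A C B).
rewrite !mxrank_ker rank_diag_block_mx mxrank1 mxrank_ker.
have := rank_leq_row (block_mx A 0 C B); have := rank_leq_row Y.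
have := rank_leq_row B; lia.
Qed.

End BlockLowerRank.

Section PartialIdentity.
Variable K : fieldType.

Definition shift_mx n s : 'M[K]_n := \matrix_(i, j) ((i + s)%N == j)%:R.

Lemma mul_pid_mxE k n l (M : 'M[K]_(n, l)) (i : 'I_k) j (lt_in : (i < n)%N) :
  (pid_mx n *m M) i j = M (Ordinal lt_in) j.
Proof.
rewrite mxE (bigD1 (Ordinal lt_in)) //= mxE eqxx lt_in mul1r big1 ?addr0 //.
move=> i' ne_i'; rewrite mxE; case: eqP => [eq_ii'|]; last by rewrite mul0r.
by case/eqP: ne_i'; apply: val_inj.
Qed.

Lemma mul_pid_mx0 k n l (M : 'M[K]_(n, l)) (i : 'I_k) j :
  (n <= i)%N -> (pid_mx n *m M) i j = 0.
Proof.
by move=> le_ni; rewrite mxE big1 // => i' _; rewrite mxE ltnNge le_ni andbF mul0r.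
Qed.

Lemma pid_mx_col_shift s n l :
  pid_mx l = col_mx (pid_mx l) (pid_mx l *m shift_mx l s) :> 'M[K]_(s + n, l).
Proof.
apply/matrixP => i j; rewrite -[i]splitK; case: (split i) => a.
  by rewrite /= col_mxEu !mxE.
rewrite /= col_mxEd; case: (ltnP a l) => lt_al.
  by rewrite mul_pid_mxE !mxE /= addnC; case: eqP => // ->; rewrite ltn_ord.
rewrite mul_pid_mx0 // mxE /=; case: eqP => //= eq_j.
by move: (ltn_ord j); rewrite -eq_j ltnNge (leq_trans lt_al (leq_addl _ _)).
Qed.

End PartialIdentity.
Arguments shift_mx {K n}.

Lemma nat_seq_stall (f : nat -> nat) (B n0 : nat) :
  (forall m, f m <= B)%N ->
  exists2 j, (j <= B - f n0)%N & (f (n0 + j).+1 <= f (n0 + j))%N.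
Proof.
move=> f_le; suff stall c n : (B - f n <= c)%N ->
    exists2 j, (j <= B - f n)%N & (f (n + j).+1 <= f (n + j))%N by apply: stall.
elim: c n => [|c IH] n le_c.
  by exists 0%N; rewrite // addn0 (leq_trans (f_le _)) //; lia.
case: (leqP (f n.+1) (f n)) => [|lt_f]; first by exists 0%N; rewrite ?addn0.
have [|j le_j] := IH n.+1; first lia.
by exists j.+1; [have := f_le n.+1; lia | rewrite -addSnnS].
Qed.

Lemma ord_muln_gt0 m n (i : 'I_(m * n)) : (0 < n)%N.
Proof. by case: n i => // i; case: i; rewrite muln0. Qed.

Section Nmat.
Variables (K : fieldType) (sigma : {rmorphism K -> K}).
Variables (p q t : nat) (E : nat -> 'M[K]_(p, q)).
Local Notation N := (Nmat sigma t E).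
Local Notation n := ((t - 1) * p)%N.

Definition subdiag_blocks : 'M[K]_(n, q) :=
  \matrix_(l, j) iter (l %/ p).+1 sigma (E (l %/ p).+2 (blk_off l) j).

Definition kerhead m : 'M[K]_(m * p, n) := kermx (N m) *m pid_mx n.

Definition kerstep r (V : 'M[K]_(r, n)) :=
  kermx (col_mx (E 1) (V *m subdiag_blocks)) *m col_mx (pid_mx n) (V *m shift_mx p).

Definition rank_gain r (V : 'M[K]_(r, n)) := \rank (col_mx (E 1) (V *m subdiag_blocks)).

Hypothesis t_gt0 : (0 < t)%N.

Lemma NmatS m :
  N m.+1 = block_mx (E 1) 0 (pid_mx n *m subdiag_blocks) (map_mx sigma (N m)).
Proof.
have divDn a d : (0 < d)%N -> ((d + a) %/ d = (a %/ d).+1)%N.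
  by move=> d_gt0; rewrite -{1}(mul1n d) divnMDl.
apply/matrixP => i j; rewrite -[i]splitK -[j]splitK.
case: (split i) => a; case: (split j) => b.
- rewrite /= block_mxEul mxE /= !divn_small // leqnn subnn t_gt0 /=.
  by congr (E 1 _ _); apply: val_inj; rewrite /= modn_small.
- rewrite /= block_mxEur mxE /= divDn ?(ord_muln_gt0 b) //.
  by rewrite (divn_small (ltn_ord a)) /= mxE.
- have p_gt0 := ord_muln_gt0 a.
  rewrite /= block_mxEdl mxE /= divDn // divn_small // subn0 /=.
  case: (ltnP a n) => lt_an.
    rewrite mul_pid_mxE mxE.
    have -> : ((a %/ p).+1 < t)%N by move: lt_an; rewrite -ltn_divLR //; lia.
    congr (sigma (iter _ _ (E _ _ _)));
      by apply: val_inj; rewrite /= (modnDl, modn_small).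
  rewrite mul_pid_mx0 //; have -> // : ((a %/ p).+1 < t)%N = false.
  by apply/negbTE; rewrite -leqNgt; move: lt_an; rewrite -leq_divRL //; lia.
- rewrite /= block_mxEdr !mxE /= !divDn ?(ord_muln_gt0 a) ?(ord_muln_gt0 b) //.
  rewrite ltnS subSS; case: ifP => _; last by rewrite rmorph0.
  by congr (sigma (iter _ _ (E _ _ _))); apply: val_inj; rewrite /= modnDl.
Qed.

Lemma mxrank_NmatS m :
  \rank (N m.+1) = (rank_gain (map_mx sigma (kerhead m)) + \rank (N m))%N.
Proof.
rewrite NmatS mxrank_block_lower mxrank_map -map_kermx /rank_gain /kerhead.
by rewrite map_mxM map_pid_mx mulmxA.
Qed.

Lemma kerheadS m : (kerhead m.+1 :=: kerstep (map_mx sigma (kerhead m)))%MS.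
Proof.
rewrite /kerhead NmatS; apply: eqmx_trans (eqmxMr _ (kermx_block_lower _ _ _)) _.
rewrite -mulmxA (pid_mx_col_shift K p (m * p) n) mul_block_col.
rewrite !mul1mx !mul0mx addr0 add0r.
by rewrite -map_kermx map_mxM map_pid_mx !mulmxA.
Qed.

Lemma kerstepS r r' (V : 'M[K]_(r, n)) (V' : 'M[K]_(r', n)) :
  (V <= V')%MS -> (kerstep V <= kerstep V')%MS.
Proof.
case/submxP => X ->; rewrite /kerstep.
have diagX c (A : 'M_(p, c)) (B : 'M_(r', c)) :
    col_mx A (X *m B) = block_mx 1%:M 0 0 X *m col_mx A B.
  by rewrite mul_block_col !mul1mx !mul0mx addr0 add0r.
rewrite -!mulmxA !diagX !mulmxA; apply/submxMr/sub_kermxP.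
by rewrite -mulmxA mulmx_ker.
Qed.

Lemma kerstep_eqmx r r' (V : 'M[K]_(r, n)) (V' : 'M[K]_(r', n)) :
  (V :=: V')%MS -> (kerstep V :=: kerstep V')%MS.
Proof. by move=> eqV; apply/eqmxP; rewrite !kerstepS ?eqV. Qed.

Lemma rank_gain_eqmx r r' (V : 'M[K]_(r, n)) (V' : 'M[K]_(r', n)) :
  (V :=: V')%MS -> rank_gain V = rank_gain V'.
Proof.
move=> eqV; rewrite /rank_gain -(addsmxE (E 1) (V *m _)) -(addsmxE (E 1) (V' *m _)).
by rewrite (adds_eqmx (eqmx_refl (E 1)) (eqmxMr _ eqV)).
Qed.

Lemma kerhead_sub m : (kerhead m <= kerhead m.+1)%MS.
Proof.
elim: m => [|m IH]; first by rewrite [kerhead 0]flatmx0 sub0mx.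
by rewrite (kerheadS m.+1) (kerheadS m) kerstepS ?map_submx.
Qed.

Lemma kerhead_stable m i :
  (kerhead m :=: kerhead m.+1)%MS -> (kerhead (m + i) :=: kerhead m)%MS.
Proof.
move=> eqWm; suff eqWS j : (kerhead (m + j) :=: kerhead (m + j).+1)%MS.
  elim: i => [|i IH]; first by rewrite addn0.
  by rewrite addnS; apply: eqmx_trans (eqmx_sym (eqWS i)) IH.
elim: j => [|j IH]; first by rewrite addn0.
rewrite addnS; apply: eqmx_trans (kerheadS _) _; apply: eqmx_sym.
by apply: eqmx_trans (kerheadS _) _; apply/kerstep_eqmx/map_eqmx/eqmx_sym.
Qed.

Lemma mxrank_kerhead_init : \rank (kerhead (t - 1)) = (n - \rank (N (t - 1)))%N.
Proof. by rewrite /kerhead pid_mx_1 mulmx1 mxrank_ker. Qed.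

Lemma kerhead_stall :
  exists2 m0, (m0 <= t - 1 + \rank (N (t - 1)))%N & (kerhead m0 :=: kerhead m0.+1)%MS.
Proof.
have [j le_j stall] := nat_seq_stall (t - 1) (fun m => rank_leq_col (kerhead m)).
exists (t - 1 + j)%N; first by move: le_j; rewrite mxrank_kerhead_init; lia.
apply/eqmxP; have [_ <-] := mxrank_leqif_eq (kerhead_sub (t - 1 + j)).
by rewrite eqn_leq stall mxrankS ?kerhead_sub.
Qed.

Lemma mxrank_Nmat_affine m0 i : (kerhead m0 :=: kerhead m0.+1)%MS ->
  \rank (N (m0 + i)) = (\rank (N m0) + i * rank_gain (map_mx sigma (kerhead m0)))%N.
Proof.
move=> eqW; elim: i => [|i IH]; first by rewrite mul0n !addn0.
have /map_eqmx eqWi := kerhead_stable i eqW.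
by rewrite addnS mxrank_NmatS IH (rank_gain_eqmx (eqWi _ sigma)) mulSn; lia.
Qed.

End Nmat.

Theorem mainTheorem6 (K : fieldType) (sigma : {rmorphism K -> K})
  (p q t : nat) (E : nat -> 'M[K]_(p, q)) :
  (1 <= t)%N ->
  exists (d : nat) (a : int) (k0 : nat),
    (k0 <= (t - 1) * (minn p q + 2))%N /\
    forall k : nat, (0 < k)%N -> (k0 <= k)%N ->
      (\rank (Nmat sigma t E k))%:Z = (d * k)%:Z + a.
Proof.
move=> t_gt0; have [m0 le_m0 eqW] := kerhead_stall sigma E t_gt0.
set d := rank_gain sigma E (map_mx sigma (kerhead sigma t E m0)).
exists d, ((\rank (Nmat sigma t E m0))%:Z - (m0 * d)%:Z), m0; split.
  have : (\rank (Nmat sigma t E (t - 1)) <= (t - 1) * minn p q)%N.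
    by case: (leqP p q) => _; rewrite ?rank_leq_row ?rank_leq_col.
  move: le_m0; rewrite mulnDr; lia.
move=> k _ le_m0k; rewrite -(subnKC le_m0k) mxrank_Nmat_affine //.
by rewrite mulnDr !PoszD !PoszM; lia.
Qed.
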